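(* Let $\Omega$ be a transitive state space (normalized so that its maximally mixed state $\omega_M$ satisfies $(\omega_M,\omega_M)_E=1$). Then the vector $\hat u\in V$ representing the unit effect $u$ via the inner product $\langle\cdot,\cdot\rangle_{GL(\Omega)}$ (i.e. $u(x)=\langle\hat u,x\rangle_{GL(\Omega)}$ for all $x\in V$; $\hat u$ lies in the internal dual cone $V^{*int}_{+}$) is equal to $\omega_M$.
   Context: $V=\mathbb R^{N+1}$ with Euclidean inner product $(\cdot,\cdot)_E$. A state space $\Omega\subset V$ is a compact convex set with $\mathrm{span}(\Omega)=V$ and $0\notin\mathrm{aff}(\Omega)$; $V_+=\{\lambda\omega:\lambda\ge0,\omega\in\Omega\}$; the unit effect $u\in V^*$ is the linear functional with $u(\omega)=1$ for all $\omega\in\Omega$. $GL(\Omega)$ is the compact group of linear bijections $T:V\to V$ with $T(\Omega)=\Omega$, $\mu$ its normalized Haar measure, and $\langle x,y\rangle_{GL(\Omega)}=\int_{GL(\Omega)}(Tx,Ty)_E\,d\mu(T)$. $\Omega$ is transitive if $GL(\Omega)$ acts transitively on the extreme points of $\Omega$; in that case there is a unique state $\omega_M\in\Omega$ (maximally mixed state) with $T\omega_M=\omega_M$ for all $T\in GL(\Omega)$, and by convention $\Omega$ is rescaled so that $(\omega_M,\omega_M)_E=1$. $V^{*int}_+=\{y\in V:\langle x,y\rangle_{GL(\Omega)}\ge0\ \forall x\in V_+\}$. *)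

From HB Require Import structures.
From mathcomp Require Import all_boot all_order all_algebra.
From mathcomp Require Import all_classical all_reals all_analysis.
Set Implicit Arguments. Unset Strict Implicit. Unset Printing Implicit Defensive.
Import Order.TTheory GRing.Theory Num.Theory.
Import numFieldNormedType.Exports.
Local Open Scope classical_set_scope.
Local Open Scope ring_scope.

(* V = R^(N+1), realised as column vectors 'cV[R]_(N.+1);
   linear maps V -> V are square matrices acting by T *m x;
   linear functionals V -> R are row vectors acting by (u *m x) 0 0. *)
Notation Vec R N := ('cV[R]_(N.+1)).
Notation Mat R N := ('M[R]_(N.+1)).

Definition dotE {R : realType} {N : nat} (x y : Vec R N) : R :=
  \sum_(i < N.+1) x i 0 * y i 0.

Definition feval {R : realType} {N : nat} (u : 'rV[R]_(N.+1)) (x : Vec R N) : R :=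
  (u *m x) 0 0.

Definition convex_set {R : realType} {N : nat} (O : set (Vec R N)) : Prop :=
  forall x y, O x -> O y -> forall t : R, 0 <= t <= 1 ->
    O (t *: x + (1 - t) *: y).

Definition spans {R : realType} {N : nat} (O : set (Vec R N)) : Prop :=
  forall v : Vec R N, exists k (c : 'I_k -> R) (w : 'I_k -> Vec R N),
    (forall i, O (w i)) /\ v = \sum_(i < k) c i *: w i.

Definition zero_in_aff {R : realType} {N : nat} (O : set (Vec R N)) : Prop :=
  exists k (c : 'I_k -> R) (w : 'I_k -> Vec R N),
    (forall i, O (w i)) /\ \sum_(i < k) c i = 1 /\ \sum_(i < k) c i *: w i = 0.

Definition state_space {R : realType} {N : nat} (O : set (Vec R N)) : Prop :=
  compact O /\ convex_set O /\ spans O /\ ~ zero_in_aff O.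

Definition unit_effect {R : realType} {N : nat} (O : set (Vec R N))
  (u : 'rV[R]_(N.+1)) : Prop :=
  forall w, O w -> feval u w = 1.

Definition extreme_point {R : realType} {N : nat} (O : set (Vec R N))
  (x : Vec R N) : Prop :=
  O x /\ forall y z, O y -> O z -> forall t : R, 0 < t < 1 ->
    x = t *: y + (1 - t) *: z -> y = x /\ z = x.

Definition GLO {R : realType} {N : nat} (O : set (Vec R N)) : set (Mat R N) :=
  [set T | T \in unitmx /\ [set T *m x | x in O] = O].

Definition transitive_ss {R : realType} {N : nat} (O : set (Vec R N)) : Prop :=
  forall e1 e2, extreme_point O e1 -> extreme_point O e2 ->
    exists2 T, GLO O T & T *m e1 = e2.

Notation MatB R N := (g_sigma_algebraType (@open (Mat R N))).

(* normalized Haar measure of GL(Omega), as a Borel probability measure on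
   the space of matrices concentrated on GL(Omega) and invariant under left
   translation by elements of GL(Omega) *)
Definition haar_GLO {R : realType} {N : nat} (O : set (Vec R N))
  (mu : probability (MatB R N) R) : Prop :=
  mu (GLO O : set (MatB R N)) = 1%E /\
  forall S, GLO O S -> forall A : set (MatB R N), measurable A ->
    mu ((fun T : MatB R N => (S *m T : Mat R N)) @^-1` A) = mu A.

Definition ipG {R : realType} {N : nat} (O : set (Vec R N))
  (mu : probability (MatB R N) R) (x y : Vec R N) : R :=
  Rintegral mu (GLO O : set (MatB R N))
    (fun T : MatB R N => dotE ((T : Mat R N) *m x) ((T : Mat R N) *m y)).

From HB Require Import structures.
From mathcomp Require Import all_boot all_order all_algebra.
From mathcomp Require Import all_classical all_reals all_analysis.
From mathcomp Require Import lra.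
Import Order.TTheory GRing.Theory Num.Theory.
Import numFieldNormedType.Exports.
Local Open Scope classical_set_scope.
Local Open Scope ring_scope.
Set Implicit Arguments. Unset Strict Implicit. Unset Printing Implicit Defensive.

(* Let Q, K and M be the Haar means of T, T T^T and T^T T over GL(Omega), so
   that <x, y>_GL = x^T M y with M positive definite.  Only left invariance of
   mu is available, which gives S Q = Q and S K S^T = K for S in GL(Omega).
   The second identity makes v |-> v^T K^-1 send GL-fixed vectors to
   GL-invariant functionals.  By transitivity an invariant functional is
   constant on the extreme points, hence a multiple of u, because a linear
   form attains its maximum over a compact set at an extreme point.  So the
   fixed vectors form the line through omegaM, and as every Q x is fixed with
   u Q = u, we get Q = omegaM u.  Therefore
   omegaM^T M = mean of (T omegaM)^T T = omegaM^T Q = u = uhat^T M, and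
   uhat = omegaM since M is invertible. *)
Section real_matrices.
Variable R : realType.

Lemma mx_norm_entry_le m n (A : 'M[R]_(m, n)) i j : `|A i j| <= `|A|.
Proof. by rewrite [leRHS]mx_normrE; apply/bigmax_geP; right; exists (i, j). Qed.

Lemma mx_norm_le m n (A : 'M[R]_(m, n)) e :
  0 <= e -> (forall i j, `|A i j| <= e) -> `|A| <= e.
Proof. by move=> e0 Ae; rewrite [leLHS]mx_normrE; apply/bigmax_leP; split. Qed.

Lemma mx_norm_mulmx_le m n p (A : 'M[R]_(m, n)) (B : 'M[R]_(n, p)) :
  `|A *m B| <= n%:R * `|A| * `|B|.
Proof.
apply: mx_norm_le => [|i j]; first by rewrite !mulr_ge0.
rewrite mxE (le_trans (ler_norm_sum _ _ _)) //.
have -> : n%:R * `|A| * `|B| = \sum_(k < n) `|A| * `|B|.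
  by rewrite sumr_const card_ord mulr_natl mulrnAl.
by apply: ler_sum => k _; rewrite normrM ler_pM ?mx_norm_entry_le.
Qed.

Lemma continuous_mulmxl m n p (A : 'M[R]_(m, n)) :
  continuous (fun B : 'M[R]_(n, p) => A *m B).
Proof.
apply: (@bounded_linear_continuous _ _ _ (mulmx A)); apply/linear_boundedP.
near=> r => B; rewrite (le_trans (mx_norm_mulmx_le _ _)) //.
by apply: ler_wpM2r => //.
Unshelve. all: by end_near. Qed.

Lemma continuous_mulmxr m n p (B : 'M[R]_(n, p)) :
  continuous (fun A : 'M[R]_(m, n) => A *m B).
Proof.
apply: (@bounded_linear_continuous _ _ _ (mulmxr B)); apply/linear_boundedP.
near=> r => A; rewrite /= (le_trans (mx_norm_mulmx_le _ _)) // mulrAC.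
by apply: ler_wpM2r => //.
Unshelve. all: by end_near. Qed.

Lemma mulmx_cV_ext m n (A B : 'M[R]_(m, n)) :
  (forall x : 'cV[R]_n, A *m x = B *m x) -> A = B.
Proof.
move=> AB; apply/matrixP => i j.
by move/matrixP/(_ i 0): (AB (delta_mx j 0)); rewrite -!colE !mxE.
Qed.

End real_matrices.

Section linear_functional.
Variables (R : realType) (N : nat).
Implicit Types (f g : 'rV[R]_(N.+1)) (x y : Vec R N).

Lemma fevalDr f x y : feval f (x + y) = feval f x + feval f y.
Proof. by rewrite /feval mulmxDr mxE. Qed.

Lemma fevalZr f (a : R) x : feval f (a *: x) = a * feval f x.
Proof. by rewrite /feval -scalemxAr mxE. Qed.

Lemma feval_sumr f k (x : 'I_k -> Vec R N) :
  feval f (\sum_(i < k) x i) = \sum_(i < k) feval f (x i).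
Proof. by rewrite /feval mulmx_sumr summxE. Qed.

Lemma fevalBl f g x : feval (f - g) x = feval f x - feval g x.
Proof. by rewrite /feval mulmxBl !mxE. Qed.

Lemma fevalNl f x : feval (- f) x = - feval f x.
Proof. by rewrite /feval mulNmx mxE. Qed.

Lemma fevalZl f (a : R) x : feval (a *: f) x = a * feval f x.
Proof. by rewrite /feval -scalemxAl mxE. Qed.

Lemma feval_delta_row x i : feval (delta_mx 0 i) x = x i 0.
Proof. by rewrite /feval -rowE mxE. Qed.

Lemma feval_delta_col f j : feval f (delta_mx j 0) = f 0 j.
Proof. by rewrite /feval -colE mxE. Qed.

Lemma feval_mulmx f (A : Mat R N) x : feval f (A *m x) = feval (f *m A) x.
Proof. by rewrite /feval mulmxA. Qed.

Lemma feval_inj f g : (forall x, feval f x = feval g x) -> f = g.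
Proof. by move=> fg; apply/rowP => j; rewrite -!feval_delta_col fg. Qed.

Lemma continuous_feval f : continuous (feval f).
Proof.
move=> x; rewrite /feval.
apply: (@continuous_comp _ _ _ (mulmx f) (fun M : 'M[R]_1 => M 0 0)).
  exact: continuous_mulmxl.
exact: coord_continuous.
Qed.

End linear_functional.

Section extreme_points.
Variables (R : realType) (N : nat).
Implicit Types (A O : set (Vec R N)) (f g : 'rV[R]_(N.+1)).

Lemma spans_neq0 O : spans O -> O !=set0.
Proof.
move=> /(_ (delta_mx 0 0)) [[|k] [c [w [Ow E]]]]; last by exists (w ord0).
by move/matrixP/(_ 0 0)/eqP: E; rewrite big_ord0 !mxE oner_eq0.
Qed.

Lemma argmax_segment A g m y z t : (forall w, A w -> feval g w <= m) ->
  A y -> A z -> 0 < t < 1 -> feval g (t *: y + (1 - t) *: z) = m ->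
  feval g y = m /\ feval g z = m.
Proof.
move=> gm Ay Az /andP[t0 t1]; rewrite fevalDr !fevalZr.
by move: (gm y Ay) (gm z Az) => gy gz E; split; nra.
Qed.

Lemma compact_argmax A g : compact A -> A !=set0 -> exists m,
  (forall w, A w -> feval g w <= m) /\
  compact (A `&` feval g @^-1` [set m]) /\ A `&` feval g @^-1` [set m] !=set0.
Proof.
move=> cA A0.
have gA : {within A, continuous (feval g)}.
  by apply: continuous_subspaceT; exact: continuous_feval.
have [c /set_mem Ac cmax] := compact_EVT_max A0 cA gA.
exists (feval g c); split; first by move=> w Aw; apply: cmax; exact: mem_set.
split; last by exists c.
apply: compact_closedI => //; apply: preimage_closed; last exact: closed_eq.
by move=> y _; exact: continuous_feval.
Qed.

(* Maximise the functionals of gs one after the other over nested argmax sets. *)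
Lemma lex_argmax (gs : seq 'rV[R]_(N.+1)) A : compact A -> A !=set0 ->
  exists2 x, A x & forall y z t, A y -> A z -> 0 < t < 1 ->
    x = t *: y + (1 - t) *: z ->
    forall g, g \in gs -> feval g y = feval g x /\ feval g z = feval g x.
Proof.
elim: gs A => [|g gs IH] A cA A0; first by case: A0 => x Ax; exists x.
have [m [gm [cAm Am0]]] := compact_argmax g cA A0.
have [x [Ax gx] xface] := IH _ cAm Am0.
exists x => // y z t Ay Az t01 xyz.
have [gy gz] : feval g y = m /\ feval g z = m.
  by apply: (argmax_segment gm Ay Az t01); rewrite -xyz.
move=> h; rewrite inE => /orP[/eqP ->|hgs]; first by rewrite gy gz gx.
exact: (xface y z t (conj Ay gy) (conj Az gz) t01 xyz h hgs).
Qed.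

Lemma extreme_argmax O f : compact O -> O !=set0 ->
  exists2 e, extreme_point O e & forall w, O w -> feval f w <= feval f e.
Proof.
move=> cO O0; have [m [fm [cOm Om0]]] := compact_argmax f cO O0.
have [e [Oe fe] eface] :=
  lex_argmax [seq delta_mx 0 i | i <- enum 'I_N.+1] cOm Om0.
exists e; last by move=> w Ow; rewrite fe; exact: fm.
split=> // y z Oy Oz t t01 eyz.
have [fy fz] : feval f y = m /\ feval f z = m.
  by apply: (argmax_segment fm Oy Oz t01); rewrite -eyz.
have coord_eq i := eface y z t (conj Oy fy) (conj Oz fz) t01 eyz _
  (map_f _ (mem_enum _ i)).
by split; apply/matrixP => i j; rewrite [j]ord1;
  have [] := coord_eq i; rewrite !feval_delta_row.
Qed.

Lemma extreme_points_separate O f : compact O -> spans O ->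
  (forall e, extreme_point O e -> feval f e = 0) -> f = 0.
Proof.
move=> cO sO f0; have O0 := spans_neq0 sO.
have [e1 /f0 fe1 fmax] := extreme_argmax f cO O0.
have [e2 /f0 fe2 fmin] := extreme_argmax (- f) cO O0.
have fO w : O w -> feval f w = 0.
  move=> Ow; apply/eqP; rewrite eq_le -{1}fe1 fmax //=.
  by rewrite -oppr_le0 -oppr0 -fe2 -!fevalNl fmin.
apply/rowP => j; rewrite mxE -feval_delta_col.
have [k [c [w [Ow ->]]]] := sO (delta_mx j 0).
by rewrite feval_sumr big1 // => i _; rewrite fevalZr fO ?mulr0.
Qed.

End extreme_points.

Definition maps_into {R : realType} {N : nat} (O : set (Vec R N)) :
  set (Mat R N) := [set T | forall x, O x -> O (T *m x)].

Section GL_group.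
Variables (R : realType) (N : nat) (O : set (Vec R N)).
Implicit Types (S T : Mat R N).

Lemma GLO_maps_into T : GLO O T -> maps_into O T.
Proof. by move=> [_ TO] x Ox; rewrite -TO; exists x. Qed.

Lemma GLO_mul S T : GLO O S -> GLO O T -> GLO O (S *m T).
Proof.
move=> [uS SO] [uT TO]; split; first by rewrite unitmx_mul uS uT.
rewrite -[RHS]SO -[in RHS]TO image_comp.
by apply: eq_imagel => x _ /=; rewrite mulmxA.
Qed.

Lemma GLO_inv S : GLO O S -> GLO O (invmx S).
Proof.
move=> [uS SO]; split; first by rewrite unitmx_inv.
by rewrite -[in LHS]SO image_comp; apply: eq_image_id => x _ /=; rewrite mulKmx.
Qed.

Lemma GLO_mulKl S T : GLO O S -> GLO O (S *m T) -> GLO O T.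
Proof.
move=> GS /(GLO_mul (GLO_inv GS)); rewrite mulmxA mulVmx ?mul1mx //.
by case: GS.
Qed.

End GL_group.

Definition reaches {R : realType} {N : nat} (O : set (Vec R N)) (x : Vec R N) :
  set (Mat R N) := [set T | exists2 y, O y & T *m y = x].

Section GL_topology.
Variables (R : realType) (N : nat) (O : set (Vec R N)).
Hypotheses (cO : compact O) (sO : spans O).

Let O0 : O !=set0. Proof. exact: spans_neq0. Qed.

Let norm_bound : exists2 B, 0 <= B & forall y, O y -> `|y| <= B.
Proof.
have [M [Mreal MO]] := compact_bounded cO.
exists (`|M| + 1); first by rewrite addr_ge0.
by move=> y Oy; apply: MO => //; rewrite (le_lt_trans (ler_norm M)) ?ltrDl.
Qed.

Lemma unitmx_of_reaches T : (forall x, O x -> exists y, T *m y = x) ->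
  T \in unitmx.
Proof.
move=> Tonto.
have /choice[s Ts] : forall j, exists s : Vec R N, T *m s = delta_mx j 0.
  move=> j; have [k [c [w [Ow ->]]]] := sO (delta_mx j 0).
  have [y Ty] := choice (fun i => Tonto _ (Ow i)).
  exists (\sum_(i < k) c i *: y i); rewrite mulmx_sumr.
  by apply: eq_bigr => i _; rewrite -scalemxAr Ty.
suff /mulmx1_unit[] : T *m (\matrix_(i, j) s j i 0) = 1%:M by [].
apply/matrixP => i j; move/matrixP/(_ i 0): (Ts j); rewrite !mxE eqxx andbT => <-.
by apply: eq_bigr => k _; rewrite mxE.
Qed.

Lemma GLOE : GLO O = maps_into O `&` \bigcap_(x in O) reaches O x.
Proof.
apply/seteqP; split => T.
  move=> GT; split=> [|x Ox]; first exact: GLO_maps_into.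
  by case: GT => _ TO; rewrite -TO in Ox; case: Ox => y Oy <-; exists y.
move=> [TOO Treach]; split.
  by apply: unitmx_of_reaches => x /Treach[y _ <-]; exists y.
apply/seteqP; split=> [_ [x Ox <-]|x /Treach[y Oy <-]]; [exact: TOO | by exists y].
Qed.

Lemma closed_maps_into : closed (maps_into O).
Proof.
have clO : closed O by apply: compact_closed => //; exact: norm_hausdorff.
rewrite (_ : maps_into O = \bigcap_(x in O) (mulmxr x @^-1` O)).
  apply: closed_bigI => x _; apply: preimage_closed => //.
  by move=> T _; exact: continuous_mulmxr.
by apply/seteqP; split=> T TO x /TO.
Qed.

(* If x is not in T(O), the distance m from x to the compact set T(O) is
   positive, and every T' closer to T than m / ((N+1)(B+1)), with B bounding
   the norms on O, misses x as well. *)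
Lemma closed_reaches x : closed (reaches O x).
Proof.
have [B B0 OB] := norm_bound.
rewrite -[reaches O x]setCK closedC openE => T /= Tx.
have dist_cont : {within O, continuous (fun y => `|T *m y - x|)}.
  apply: continuous_subspaceT => y; apply: continuous_comp; last exact: norm_continuous.
  by apply: continuousB; [exact: continuous_mulmxl | exact: cst_continuous].
have [c /set_mem Oc cmin] := compact_EVT_min O0 cO dist_cont.
set m := `|T *m c - x| in cmin.
have m_gt0 : 0 < m.
  by rewrite normr_gt0 subr_eq0; apply: contra_notN Tx => /eqP; exists c.
have NB_gt0 : 0 < N.+1%:R * (B + 1) by rewrite mulr_gt0 ?ltr_wpDl.
apply/nbhs_ballP; exists (m / (N.+1%:R * (B + 1))) => [|T' /=]; first exact: divr_gt0.
rewrite -ball_normE /= ltr_pdivlMr // => TT' [y Oy T'y].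
have := cmin y (mem_set Oy); rewrite -T'y -mulmxBl; apply/negP; rewrite -ltNge.
apply: le_lt_trans (mx_norm_mulmx_le _ _) _; apply: le_lt_trans TT'.
rewrite -mulrA mulrCA; do 2!apply: ler_wpM2l => //.
by rewrite (le_trans (OB y Oy)) // lerDl.
Qed.

Lemma closed_GLO : closed (GLO O).
Proof.
rewrite GLOE; apply: closedI; first exact: closed_maps_into.
by apply: closed_bigI => x _; exact: closed_reaches.
Qed.

Lemma GLO_entry_bounded : exists C, forall T, GLO O T -> forall i j, `|T i j| <= C.
Proof.
have [B B0 OB] := norm_bound.
have /choice[C HC] : forall j, exists C : R,
    forall T, maps_into O T -> forall i, `|T i j| <= C.
  move=> j; have [k [c [w [Ow ej]]]] := sO (delta_mx j 0).
  exists (\sum_(l < k) `|c l| * B) => T TO i.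
  have -> : T i j = (T *m (delta_mx j 0 : Vec R N)) i 0 by rewrite -colE mxE.
  rewrite ej mulmx_sumr summxE.
  apply: le_trans (ler_norm_sum _ _ _) _; apply: ler_sum => l _.
  rewrite -scalemxAr mxE normrM ler_wpM2l //.
  exact: le_trans (mx_norm_entry_le _ _ _) (OB _ (TO _ (Ow l))).
exists (\sum_j `|C j|) => T /GLO_maps_into TO i j.
apply: le_trans (HC j T TO i) _; apply: le_trans (ler_norm _) _.
by rewrite (bigD1 j) //= lerDl sumr_ge0.
Qed.

End GL_topology.

Definition integrand {R : realType} {N : nat} (O : set (Vec R N))
  (f : Mat R N -> R) : Prop :=
  continuous f /\ exists C, forall T, GLO O T -> `|f T| <= C.

Section integrands.
Variables (R : realType) (N : nat) (O : set (Vec R N)).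
Implicit Types (f g : Mat R N -> R).

Lemma integrand_cst c : integrand O (fun=> c).
Proof. by split; [exact: cst_continuous | exists `|c|]. Qed.

Lemma integrandD f g : integrand O f -> integrand O g ->
  integrand O (fun T => f T + g T).
Proof.
move=> [cf [C fC]] [cg [D gD]]; split=> [T|].
  by apply: continuousD; [exact: cf | exact: cg].
exists (C + D) => T GT; apply: le_trans (ler_normD _ _) _.
by apply: lerD; [exact: fC | exact: gD].
Qed.

Lemma integrandM f g : integrand O f -> integrand O g ->
  integrand O (fun T => f T * g T).
Proof.
move=> [cf [C fC]] [cg [D gD]]; split=> [T|].
  by apply: continuousM; [exact: cf | exact: cg].
by exists (C * D) => T GT; rewrite normrM ler_pM ?fC ?gD.
Qed.

Lemma integrand_sum (I : Type) (s : seq I) (F : I -> Mat R N -> R) :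
  (forall i, integrand O (F i)) -> integrand O (fun T => \sum_(i <- s) F i T).
Proof.
move=> FO; elim: s => [|i s IH].
  by under eq_fun do rewrite big_nil; exact: integrand_cst.
by under eq_fun do rewrite big_cons; exact: integrandD.
Qed.

Lemma integrand_mull S f : GLO O S -> integrand O f ->
  integrand O (fun T => f (S *m T)).
Proof.
move=> GS [cf [C fC]]; split=> [T|].
  by apply: continuous_comp; [exact: continuous_mulmxl | exact: cf].
by exists C => T GT; apply: fC; exact: GLO_mul.
Qed.

Lemma integrand_entry i j : compact O -> spans O -> integrand O (fun T => T i j).
Proof.
move=> cO sO; split; first exact: coord_continuous.
by have [C TC] := GLO_entry_bounded cO sO; exists C => T /TC.
Qed.

End integrands.

Section borel_matrices.
Variables (R : realType) (N : nat).

Lemma continuous_measurable_fun_mx (f : Mat R N -> R) : continuous f ->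
  measurable_fun setT (f : MatB R N -> R).
Proof.
move=> cf; apply: (measurability _ (measurable_realfun.RGenOpens.measurableE R)).
move=> _ [_ [a [b ->] <-]]; apply: sub_sigma_algebra.
by rewrite setTI; apply: (continuousP _).1 cf _ (itv_open _ _).
Qed.

Lemma measurable_mulmxl (S : Mat R N) :
  measurable_fun setT (fun T : MatB R N => (S *m T : MatB R N)).
Proof.
apply: (@measurability _ _ (MatB R N) (MatB R N) setT _ open) => //.
move=> _ [B oB <-]; apply: sub_sigma_algebra.
by rewrite setTI; apply: (continuousP _).1 (@continuous_mulmxl _ _ _ N.+1 S) B oB.
Qed.

Lemma measurable_GLO (O : set (Vec R N)) : compact O -> spans O ->
  measurable (GLO O : set (MatB R N)).
Proof.
move=> cO sO; rewrite -[GLO O]setCK; apply: measurableC; apply: sub_sigma_algebra.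
by apply: closed_openC; exact: closed_GLO.
Qed.

End borel_matrices.

Definition haar_mean {R : realType} {N : nat} (O : set (Vec R N))
  (mu : probability (MatB R N) R) (f : Mat R N -> R) : R :=
  Rintegral mu (GLO O : set (MatB R N)) (f : MatB R N -> R).

Section haar_mean.
Variables (R : realType) (N : nat) (O : set (Vec R N)).
Variable mu : probability (MatB R N) R.
Hypotheses (cO : compact O) (sO : spans O) (hmu : haar_GLO O mu).
Implicit Types (f g : Mat R N -> R).

Let mGLO := measurable_GLO cO sO.

Lemma integrable_integrand f : integrand O f ->
  mu.-integrable (GLO O : set (MatB R N)) (EFin \o (f : MatB R N -> R)).
Proof.
move=> [cf [C fC]]; apply: measurable_bounded_integrable => //.
- by rewrite (le_lt_trans (probability_le1 mu mGLO)) ?ltey.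
- exact: measurable_funS (continuous_measurable_fun_mx cf).
- exists C; split; first exact: num_real.
  by move=> x Cx T GT; apply: le_trans (fC T GT) (ltW Cx).
Qed.

Lemma eq_haar_mean f g : (forall T, GLO O T -> f T = g T) ->
  haar_mean O mu f = haar_mean O mu g.
Proof. by move=> fg; apply: eq_Rintegral => T /set_mem; exact: fg. Qed.

Lemma haar_meanD f g : integrand O f -> integrand O g ->
  haar_mean O mu (fun T => f T + g T) = haar_mean O mu f + haar_mean O mu g.
Proof.
by move=> If Ig; rewrite /haar_mean RintegralD //; exact: integrable_integrand.
Qed.

Lemma haar_meanZ c f : integrand O f ->
  haar_mean O mu (fun T => c * f T) = c * haar_mean O mu f.
Proof.
by move=> If; rewrite /haar_mean RintegralZl //; exact: integrable_integrand.
Qed.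

Lemma haar_mean_cst c : haar_mean O mu (fun=> c) = c.
Proof.
rewrite /haar_mean Rintegral_cst //.
transitivity (c * fine (1%E : \bar R)); last by rewrite mulr1.
by congr (_ * fine _); exact: hmu.1.
Qed.

Lemma haar_mean_sum (I : Type) (s : seq I) (F : I -> Mat R N -> R) :
  (forall i, integrand O (F i)) ->
  haar_mean O mu (fun T => \sum_(i <- s) F i T) = \sum_(i <- s) haar_mean O mu (F i).
Proof.
move=> IF; elim: s => [|i s IH].
  by under eq_fun do rewrite big_nil; rewrite haar_mean_cst big_nil.
under eq_fun do rewrite big_cons.
by rewrite haar_meanD ?big_cons ?IH //; exact: integrand_sum.
Qed.

Lemma haar_mean_mull S f : GLO O S -> integrand O f ->
  haar_mean O mu (fun T => f (S *m T)) = haar_mean O mu f.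
Proof.
move=> GS If; rewrite /haar_mean /Rintegral; congr fine.
set lS := fun T : MatB R N => (S *m T : MatB R N).
have GLO_pre : lS @^-1` GLO O = GLO O.
  by apply/seteqP; split => T /=; [exact: GLO_mulKl | exact: GLO_mul].
transitivity (\int[mu]_(T in lS @^-1` GLO O)
  (((EFin \o (f : MatB R N -> R)) \o lS) T))%E; first by rewrite GLO_pre.
rewrite -integral_pushforward //.
- apply: eq_measure_integral; first exact: measurable_mulmxl.
  by move=> mlS A mA _; exact: hmu.2.
- exact: measurable_mulmxl.
- apply/measurable_realfun.measurable_EFinP; exact: continuous_measurable_fun_mx If.1.
- by rewrite GLO_pre; exact: integrable_integrand (integrand_mull GS If).
Qed.

Lemma haar_mean_ge0_eq0 f : integrand O f -> (forall T, GLO O T -> 0 <= f T) ->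
  haar_mean O mu f = 0 -> exists2 T, GLO O T & f T = 0.
Proof.
move=> If f_ge0 f0.
have intf := integrable_integrand If.
have [mf _] := integrableP _ _ _ intf.
have normf0 : (\int[mu]_(x in GLO O) `|(EFin \o (f : MatB R N -> R)) x|)%E = 0%E.
  transitivity (\int[mu]_(x in GLO O) (EFin \o (f : MatB R N -> R)) x)%E.
    by apply: eq_integral => T /set_mem GT /=; rewrite ger0_norm ?f_ge0.
  rewrite -(fineK (integrable_fin_num mGLO intf)).
  by move: f0; rewrite /haar_mean /Rintegral => ->.
have [A [mA muA fA]] := (ae_eq_integral_abs mu mGLO mf).1 normf0.
apply: contrapT => nof0.
have : mu (GLO O) = 0%E.
  apply: (subset_measure0 mGLO mA _ muA) => T GT; apply: fA => /(_ GT) [fT0].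
  by apply: nof0; exists T.
by rewrite hmu.1 => /eqP; rewrite onee_eq0.
Qed.

End haar_mean.

Section row_gram.
Variables (R : realType) (n : nat).
Implicit Type a : 'rV[R]_n.

Lemma row_gram_ge0 a : 0 <= (a *m a^T) 0 0.
Proof. by rewrite mxE sumr_ge0 // => j _; rewrite mxE -expr2 sqr_ge0. Qed.

Lemma row_gram_eq0 a : (a *m a^T) 0 0 = 0 -> a = 0.
Proof.
rewrite mxE => /eqP; rewrite psumr_eq0 => [/allP a0|j _]; last first.
  by rewrite mxE -expr2 sqr_ge0.
apply/rowP => j; move/(_ j (mem_index_enum j)): a0.
by rewrite !mxE mulf_eq0 orbb => /eqP.
Qed.

End row_gram.

Lemma dotE_mx (R : realType) N (x y : Vec R N) : dotE x y = (x^T *m y) 0 0.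
Proof. by rewrite mxE; apply: eq_bigr => i _; rewrite mxE. Qed.

Definition integrand_mx {R : realType} {N : nat} (O : set (Vec R N)) {a b : nat}
  (F : Mat R N -> 'M[R]_(a, b)) : Prop :=
  forall i j, integrand O (fun T => F T i j).

Definition haar_meanmx {R : realType} {N : nat} (O : set (Vec R N))
  (mu : probability (MatB R N) R) {a b : nat} (F : Mat R N -> 'M[R]_(a, b)) :
  'M[R]_(a, b) :=
  \matrix_(i, j) haar_mean O mu (fun T => F T i j).

Section integrand_mx.
Variables (R : realType) (N : nat) (O : set (Vec R N)).

Lemma integrand_mx_cst a b (A : 'M[R]_(a, b)) : integrand_mx O (fun=> A).
Proof. by move=> i j; exact: integrand_cst. Qed.

Lemma integrand_mx_id : compact O -> spans O -> integrand_mx O id.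
Proof. by move=> cO sO i j; exact: integrand_entry. Qed.

Lemma integrand_mxM a b c (F : Mat R N -> 'M[R]_(a, b))
    (G : Mat R N -> 'M[R]_(b, c)) :
  integrand_mx O F -> integrand_mx O G -> integrand_mx O (fun T => F T *m G T).
Proof.
move=> IF IG i j; under eq_fun do rewrite mxE.
by apply: integrand_sum => k; exact: integrandM.
Qed.

Lemma integrand_mx_tr a b (F : Mat R N -> 'M[R]_(a, b)) :
  integrand_mx O F -> integrand_mx O (fun T => (F T)^T).
Proof. by move=> IF i j; under eq_fun do rewrite mxE. Qed.

End integrand_mx.

Section haar_meanmx.
Variables (R : realType) (N : nat) (O : set (Vec R N)).
Variable mu : probability (MatB R N) R.
Hypotheses (cO : compact O) (sO : spans O) (hmu : haar_GLO O mu).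

Lemma eq_haar_meanmx a b (F G : Mat R N -> 'M[R]_(a, b)) :
  (forall T, GLO O T -> F T = G T) -> haar_meanmx O mu F = haar_meanmx O mu G.
Proof.
by move=> FG; apply/matrixP => i j; rewrite !mxE; apply: eq_haar_mean => T /FG ->.
Qed.

Lemma haar_meanmx_cst a b (A : 'M[R]_(a, b)) : haar_meanmx O mu (fun=> A) = A.
Proof. by apply/matrixP => i j; rewrite mxE haar_mean_cst. Qed.

Lemma haar_meanmxMl a b c (A : 'M[R]_(a, b)) (F : Mat R N -> 'M[R]_(b, c)) :
  integrand_mx O F ->
  haar_meanmx O mu (fun T => A *m F T) = A *m haar_meanmx O mu F.
Proof.
move=> IF; apply/matrixP => i j; rewrite !mxE.
under eq_haar_mean do rewrite mxE.
rewrite haar_mean_sum // => [|k]; last by apply: integrandM; [exact: integrand_cst|].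
by apply: eq_bigr => k _; rewrite haar_meanZ // mxE.
Qed.

Lemma haar_meanmxMr a b c (F : Mat R N -> 'M[R]_(a, b)) (B : 'M[R]_(b, c)) :
  integrand_mx O F ->
  haar_meanmx O mu (fun T => F T *m B) = haar_meanmx O mu F *m B.
Proof.
move=> IF; apply/matrixP => i j; rewrite !mxE.
rewrite (@eq_haar_mean _ _ _ mu _ (fun T => \sum_k B k j * F T i k)); last first.
  by move=> T _; rewrite mxE; apply: eq_bigr => k _; rewrite mulrC.
rewrite haar_mean_sum // => [|k]; last by apply: integrandM; [exact: integrand_cst|].
by apply: eq_bigr => k _; rewrite haar_meanZ // mxE mulrC.
Qed.

Lemma haar_meanmx_mull a b (F : Mat R N -> 'M[R]_(a, b)) S :
  GLO O S -> integrand_mx O F ->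
  haar_meanmx O mu (fun T => F (S *m T)) = haar_meanmx O mu F.
Proof.
by move=> GS IF; apply/matrixP => i j; rewrite !mxE; exact: haar_mean_mull.
Qed.

Lemma haar_meanmx_gram_row_free (F : Mat R N -> Mat R N) :
  integrand_mx O F -> (forall T, GLO O T -> F T \in unitmx) ->
  row_free (haar_meanmx O mu (fun T => F T *m (F T)^T)).
Proof.
move=> IF Funit; apply: inj_row_free => r rG0.
have IrF : integrand_mx O (fun T => r *m F T).
  by apply: integrand_mxM => //; exact: integrand_mx_cst.
have IG : integrand_mx O (fun T => r *m F T *m (r *m F T)^T).
  by apply: integrand_mxM => //; exact: integrand_mx_tr.
have mean0 : haar_mean O mu (fun T => (r *m F T *m (r *m F T)^T) 0 0) = 0.
  have : (r *m haar_meanmx O mu (fun T => F T *m (F T)^T) *m r^T) 0 0 = 0.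
    by rewrite rG0 mul0mx mxE.
  have IFF : integrand_mx O (fun T => F T *m (F T)^T).
    by apply: integrand_mxM => //; exact: integrand_mx_tr.
  rewrite -haar_meanmxMl // -haar_meanmxMr ?mxE => [<-|]; last first.
    by apply: integrand_mxM => //; exact: integrand_mx_cst.
  by apply: eq_haar_mean => T _; rewrite trmx_mul !mulmxA.
have [T GT /row_gram_eq0 rFT0] :=
  haar_mean_ge0_eq0 cO sO hmu (IG 0 0) (fun T _ => row_gram_ge0 _) mean0.
by rewrite -[r](mulmxK (Funit T GT)) rFT0 mul0mx.
Qed.

Lemma row_free_haar_gram : row_free (haar_meanmx O mu (fun T => T^T *m T)).
Proof.
have -> : haar_meanmx O mu (fun T => T^T *m T) =
    haar_meanmx O mu (fun T => T^T *m (T^T)^T).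
  by apply: eq_haar_meanmx => T _; rewrite trmxK.
apply: haar_meanmx_gram_row_free => [|T [uT _]]; last by rewrite unitmx_tr.
exact/integrand_mx_tr/integrand_mx_id.
Qed.

Lemma ipG_gram x y :
  ipG O mu x y = (x^T *m haar_meanmx O mu (fun T => T^T *m T) *m y) 0 0.
Proof.
have IG : integrand_mx O (fun T => T^T *m T).
  by apply: integrand_mxM; [apply/integrand_mx_tr |]; exact: integrand_mx_id.
rewrite -haar_meanmxMl // -haar_meanmxMr ?mxE; last first.
  by apply: integrand_mxM => //; exact: integrand_mx_cst.
by apply: eq_haar_mean => T _; rewrite dotE_mx trmx_mul !mulmxA.
Qed.

End haar_meanmx.

Definition GLO_fixed {R : realType} {N : nat} (O : set (Vec R N)) (v : Vec R N) :=
  forall S, GLO O S -> S *m v = v.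

Section transitive_state_space.
Variables (R : realType) (N : nat) (O : set (Vec R N)).
Variables (mu : probability (MatB R N) R) (u : 'rV[R]_(N.+1)).
Hypotheses (cO : compact O) (sO : spans O) (trO : transitive_ss O).
Hypotheses (hmu : haar_GLO O mu) (uO : unit_effect O u).

Lemma unit_effect_GLO_invariant T : GLO O T -> u *m T = u.
Proof.
move=> GT; apply: feval_inj => x; rewrite -feval_mulmx.
have [k [c [w [Ow ->]]]] := sO x; rewrite mulmx_sumr !feval_sumr.
apply: eq_bigr => i _; rewrite -scalemxAr !fevalZr !uO //.
exact: GLO_maps_into GT _ (Ow i).
Qed.

Lemma GLO_invariant_functional phi : (forall S, GLO O S -> phi *m S = phi) ->
  exists c, phi = c *: u.
Proof.
move=> phiS; have [e1 e1_ext _] := extreme_argmax 0 cO (spans_neq0 sO).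
exists (feval phi e1); apply/eqP; rewrite -subr_eq0; apply/eqP.
apply: (extreme_points_separate cO sO) => e e_ext.
have [S GS Se1] := trO e1_ext e_ext.
have OSe1 : O (S *m e1) by rewrite Se1; case: e_ext.
by rewrite -Se1 fevalBl fevalZl uO // mulr1 feval_mulmx phiS ?subrr.
Qed.

Local Notation K := (haar_meanmx O mu (fun T => T *m T^T)).

Lemma GLO_congr_K S : GLO O S -> S *m K *m S^T = K.
Proof.
move=> GS; have IK : integrand_mx O (fun T => T *m T^T).
  by apply: integrand_mxM; [| apply/integrand_mx_tr]; exact: integrand_mx_id.
rewrite -haar_meanmxMl // -haar_meanmxMr //; last first.
  by apply: integrand_mxM => //; exact: integrand_mx_cst.
transitivity (haar_meanmx O mu (fun T => (S *m T) *m (S *m T)^T)).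
  by apply: eq_haar_meanmx => T _; rewrite trmx_mul !mulmxA.
exact: (haar_meanmx_mull cO sO hmu GS IK).
Qed.

Lemma unitmx_K : K \in unitmx.
Proof.
rewrite -row_free_unit; apply: haar_meanmx_gram_row_free => //.
  exact: integrand_mx_id.
by move=> T [].
Qed.

Lemma GLO_fixed_line v : GLO_fixed O v -> exists c, v = c *: (u *m K)^T.
Proof.
move=> vfix; set phi := v^T *m invmx K.
have phiS S : GLO O S -> phi *m S = phi.
  move=> GS; have uS : S \in unitmx by case: GS.
  have uKS : K *m S^T \in unitmx by rewrite unitmx_mul unitmx_K unitmx_tr.
  apply: (can_inj (mulmxK uKS)); rewrite -mulmxA (mulmxA S) GLO_congr_K //.
  rewrite /phi mulmxKV ?unitmx_K // mulmxA mulmxKV ?unitmx_K //.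
  by rewrite -trmx_mul vfix.
have [c phiE] := GLO_invariant_functional phiS.
by exists c; rewrite -[v]trmxK -[v^T](mulmxKV unitmx_K) -/phi phiE -scalemxAl linearZ.
Qed.

Variable omega : Vec R N.
Hypotheses (Oomega : O omega) (omega_fixed : GLO_fixed O omega).

Lemma GLO_fixedE v : GLO_fixed O v -> v = feval u v *: omega.
Proof.
move=> vfix; have [a ->] := GLO_fixed_line vfix.
have [b omegaE] := GLO_fixed_line omega_fixed.
have bu1 : b * feval u (u *m K)^T = 1 by rewrite -fevalZr -omegaE uO.
by rewrite fevalZr omegaE scalerA -mulrA [_ * b]mulrC bu1 mulr1.
Qed.

Lemma haar_meanmx_id : haar_meanmx O mu id = omega *m u.
Proof.
have Iid := integrand_mx_id cO sO.
have uQ : u *m haar_meanmx O mu id = u.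
  rewrite -haar_meanmxMl // -[RHS](haar_meanmx_cst cO sO hmu u).
  exact: eq_haar_meanmx unit_effect_GLO_invariant.
have Qx_fixed x : GLO_fixed O (haar_meanmx O mu id *m x).
  move=> S GS; rewrite mulmxA -haar_meanmxMl //.
  by congr (_ *m _); exact: (haar_meanmx_mull cO sO hmu GS Iid).
apply: mulmx_cV_ext => x; rewrite (GLO_fixedE (Qx_fixed x)) feval_mulmx uQ.
by rewrite -mulmxA [u *m x]mx11_scalar mul_mx_scalar.
Qed.

Lemma omega_haar_gram :
  omega^T *m haar_meanmx O mu (fun T => T^T *m T) = dotE omega omega *: u.
Proof.
have Iid := integrand_mx_id cO sO.
rewrite -haar_meanmxMl //; last first.
  by apply: integrand_mxM => //; exact: integrand_mx_tr.
transitivity (haar_meanmx O mu (fun T => omega^T *m T)).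
  by apply: eq_haar_meanmx => T GT; rewrite mulmxA -trmx_mul omega_fixed.
rewrite haar_meanmxMl // haar_meanmx_id mulmxA.
by rewrite [omega^T *m omega]mx11_scalar mul_scalar_mx dotE_mx.
Qed.

End transitive_state_space.

Unset Implicit Arguments.

Theorem lemma3p1 (R : realType) (N : nat) (Omega : set (Vec R N))
  (mu : probability (MatB R N) R) (omegaM : Vec R N)
  (u : 'rV[R]_(N.+1)) (uhat : Vec R N) :
  state_space Omega ->
  transitive_ss Omega ->
  haar_GLO Omega mu ->
  Omega omegaM ->
  (forall T, GLO Omega T -> T *m omegaM = omegaM) ->
  dotE omegaM omegaM = 1 ->
  unit_effect Omega u ->
  (forall x : Vec R N, feval u x = ipG Omega mu uhat x) ->
  uhat = omegaM.
Proof.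
move=> [cO [_ [sO _]]] trO hmu Oomega omega_fixed omega_unit uO uhatE.
apply/trmx_inj/(row_free_inj (row_free_haar_gram cO sO hmu)).
rewrite (omega_haar_gram cO sO trO hmu uO Oomega omega_fixed) omega_unit scale1r.
by apply: feval_inj => x; rewrite uhatE ipG_gram.
Qed.
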